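(* For $n>0$ and $J\subseteq S$, there is a bijection $\mathrm{NN}_n^J\simeq\mathrm{NC}_n^J$.
   Context: $S=\{s_1,\dots,s_{n-1}\}$ with $s_i=(i,i+1)$ the adjacent transpositions of $\mathfrak{S}_n$. For $J\subseteq S$, writing $J=S\setminus\{s_{j_1},\dots,s_{j_r}\}$ with $j_1<\dots<j_r$, the $J$-regions are $\{1,\dots,j_1\},\{j_1+1,\dots,j_2\},\dots,\{j_r+1,\dots,n\}$. For a set partition $\mathbf P$ of $[n]$, a bump is a pair $(a,b)$, $a<b$, with $a,b$ in the same part and no element of that part strictly between them. $\mathbf P$ is $J$-noncrossing if: (NC1) no two distinct elements of the same $J$-region lie in the same part; (NC2) whenever two distinct bumps $(i_1,i_2),(j_1,j_2)$ satisfy $i_1<j_1<i_2<j_2$, either $i_1,j_1$ lie in the same $J$-region or $i_2,j_1$ lie in the same $J$-region; (NC3) whenever two distinct bumps satisfy $i_1<j_1<j_2<i_2$, then $i_1$ and $j_1$ lie in different $J$-regions. $\mathbf P$ is $J$-nonnesting if (NN1) no two distinct elements of the same $J$-region lie in the same part, and (NN2) there are no two distinct bumps $(i_1,i_2),(j_1,j_2)$ with $i_1<j_1<j_2<i_2$. $\mathrm{NC}_n^J$ and $\mathrm{NN}_n^J$ denote the sets of $J$-noncrossing and $J$-nonnesting partitions of $[n]$. *)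

From mathcomp Require Import all_boot.
Set Implicit Arguments. Unset Strict Implicit. Unset Printing Implicit Defensive.

(* Conventions: the ground set [n] = {1,...,n} is represented by 'I_n, where
   the ordinal of value a stands for the integer a+1.  The generator
   s_k = (k,k+1) (1 <= k <= n-1) is represented by the ordinal k-1 : 'I_(n.-1);
   it swaps the elements represented by k-1 and k. *)

Section JPartitions.
Variables (n : nat) (J : {set 'I_(n.-1)}).

(* a and b lie in the same J-region iff every generator s_k with
   min(a,b) < k <= max(a,b) (1-based) lies in J, i.e. no region boundary
   separates them. *)
Definition same_region (a b : 'I_n) : bool :=
  [forall k : 'I_(n.-1), ((minn a b <= k) && (k < maxn a b)) ==> (k \in J)].

Definition bump (P : {set {set 'I_n}}) (a b : 'I_n) : bool :=
  (a < b) &&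
  [exists B in P, [&& a \in B, b \in B &
     [forall c in B, ~~ ((a < c) && (c < b))]]].

Definition cond1 (P : {set {set 'I_n}}) : bool :=
  [forall B in P, forall a in B, forall b in B,
     (a != b) ==> ~~ same_region a b].

Definition NC : {set {set {set 'I_n}}} :=
  [set P | [&& partition P [set: 'I_n], cond1 P,
    [forall i1, forall i2, forall j1, forall j2,
      [&& bump P i1 i2, bump P j1 j2, (i1, i2) != (j1, j2),
          i1 < j1, j1 < i2 & i2 < j2] ==>
      (same_region i1 j1 || same_region i2 j1)] &
    [forall i1, forall i2, forall j1, forall j2,
      [&& bump P i1 i2, bump P j1 j2, (i1, i2) != (j1, j2),
          i1 < j1, j1 < j2 & j2 < i2] ==>
      ~~ same_region i1 j1]]].

Definition NN : {set {set {set 'I_n}}} :=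
  [set P | [&& partition P [set: 'I_n], cond1 P &
    [forall i1, forall i2, forall j1, forall j2,
      ~~ [&& bump P i1 i2, bump P j1 j2, (i1, i2) != (j1, j2),
             i1 < j1, j1 < j2 & j2 < i2]]]].

End JPartitions.

From Pilot Require Import Defs.
From mathcomp Require Import all_boot zify.
Set Implicit Arguments. Unset Strict Implicit. Unset Printing Implicit Defensive.

(* A set partition of [n] is determined by its set of bumps, and the bump sets
   of partitions are exactly the arc diagrams: sets of arcs (a, b), a < b, in
   which every point opens at most one arc and closes at most one.  Condition
   (NC1) = (NN1) says that the J-region index strictly increases along every
   arc, and NN2, resp. NC2 and NC3, become conditions on pairs of arcs.
   Send a diagram to its pair (openers, closers).  This is injective on each
   class: at the smallest closer where two diagrams with the same endpoints
   disagree, one of them crosses and the other nests on the same four points,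
   which is impossible in either class.  Both classes have the same image: any
   region-increasing diagram is turned into one of either class with the same
   endpoints by repeatedly exchanging the closers of an offending pair of arcs,
   which strictly lowers a weight sum_(a, b) f(a) g(b) by the rearrangement
   inequality. *)

Lemma card_eq_bijective (X Y : finType) : #|X| = #|Y| -> exists f : X -> Y, bijective f.
Proof.
move=> eXY; exists (fun x => enum_val (cast_ord eXY (enum_rank x))).
exists (fun y => enum_val (cast_ord (esym eXY) (enum_rank y))) => [x|y].
  by rewrite enum_valK cast_ordK enum_rankK.
by rewrite enum_valK cast_ordKV enum_rankK.
Qed.

Lemma rearrangement_ltn p q x y : p < q -> x < y -> p * y + q * x < p * x + q * y.
Proof. by move=> ? ?; nia. Qed.

Lemma forall4P (A : finType) (p : A -> A -> A -> A -> bool) :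
  reflect (forall a b c d, p a b c d) [forall a, forall b, forall c, forall d, p a b c d].
Proof.
apply: (iffP forallP) => [all4 a b c d | all4 a].
  by move: (all4 a) => /forallP /(_ b) /forallP /(_ c) /forallP /(_ d).
by apply/forallP => b; apply/forallP => c; apply/forallP => d; apply: all4.
Qed.

Section Arcs.
Variable n : nat.
Notation T := 'I_n.
Implicit Types (x y a b c d : T) (E F : {set T * T}) (P Q : {set {set T}}).

Definition arc_diagram E :=
  [forall e in E, forall f in E, (e.1 == f.1) || (e.2 == f.2) ==> (e == f)].

Definition openers E : {set T} := [set e.1 | e in E].
Definition closers E : {set T} := [set e.2 | e in E].

Lemma arc_diagramP E :
  reflect (forall e f, e \in E -> f \in E -> e.1 = f.1 \/ e.2 = f.2 -> e = f)
          (arc_diagram E).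
Proof.
apply: (iffP forallP) => [eq_arcs e f eE fE efE|eq_arcs e].
  move: (eq_arcs e); rewrite eE => /forallP /(_ f); rewrite fE /=.
  by case: efE => ->; rewrite eqxx ?orbT => /eqP.
apply/implyP => eE; apply/forallP => f; apply/implyP => fE; apply/implyP.
by case/orP => /eqP efE; apply/eqP; apply: eq_arcs => //; [left|right].
Qed.

Lemma arc_diagram_card E :
  arc_diagram E = (#|openers E| == #|E|) && (#|closers E| == #|E|).
Proof.
apply/arc_diagramP/andP => [eq_arcs|[/imset_injP inj1 /imset_injP inj2] e f eE fE [|]].
- by split; apply/imset_injP => e f eE fE efE; apply: eq_arcs => //; [left|right].
- exact: inj1.
- exact: inj2.
Qed.

Lemma arc_diagramS E F : F \subset E -> arc_diagram E -> arc_diagram F.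
Proof.
move=> /subsetP sFE /arc_diagramP eq_arcs; apply/arc_diagramP => e f eF fF.
by apply: eq_arcs; apply: sFE.
Qed.

Lemma openersP E a : reflect (exists b, (a, b) \in E) (a \in openers E).
Proof.
apply: (iffP imsetP) => [[[u v] e /= ->]|[b ab]]; first by exists v.
by exists (a, b).
Qed.

Lemma closersP E b : reflect (exists a, (a, b) \in E) (b \in closers E).
Proof.
apply: (iffP imsetP) => [[[u v] e /= ->]|[a ab]]; first by exists u.
by exists (a, b).
Qed.

Definition nonnesting E := [forall e in E, forall f in E, ~~ ((e.1 < f.1) && (f.2 < e.2))].

Lemma nonnestingP E :
  reflect (forall a b c d, (a, b) \in E -> (c, d) \in E -> a < c -> d < b -> False)
          (nonnesting E).
Proof.
apply: (iffP forallP) => [nn a b c d ab cd ac db|nn [a b]].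
  by move: (nn (a, b)); rewrite ab => /forallP /(_ (c, d)); rewrite cd /= ac db.
apply/implyP => ab; apply/forallP => [[c d]]; apply/implyP => cd /=.
by apply/negP => /andP [ac db]; apply: (nn a b c d).
Qed.

Definition bumps P : {set T * T} := [set e | Defs.bump P e.1 e.2].

Lemma in_bumps P a b : ((a, b) \in bumps P) = Defs.bump P a b.
Proof. by rewrite inE. Qed.

Lemma bump_blockP P a b :
  reflect (a < b /\ exists2 C, C \in P &
             [/\ a \in C, b \in C & forall c, c \in C -> ~~ (a < c < b)])
          (Defs.bump P a b).
Proof.
apply: (iffP andP) => [[ab /existsP [C /andP[CP /and3P[aC bC /forallP gap]]]]|].
  split => //; exists C => //; split => // c cC.
  by move: (gap c); rewrite cC.
case=> ab [C CP [aC bC gap]]; split => //; apply/existsP; exists C.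
by rewrite CP aC bC /=; apply/forallP => c; apply/implyP => /gap.
Qed.

Section Partition.
Variable P : {set {set T}}.
Hypothesis partP : partition P [set: T].

Lemma mem_pblockT x : x \in pblock P x.
Proof. by rewrite mem_pblock (cover_partition partP) inE. Qed.

Lemma pblock_memT x : pblock P x \in P.
Proof. by rewrite pblock_mem // (cover_partition partP) inE. Qed.

Lemma def_pblockT B x : B \in P -> x \in B -> pblock P x = B.
Proof. exact: def_pblock (partition_trivIset partP). Qed.

Lemma same_pblockT x y : y \in pblock P x -> pblock P y = pblock P x.
Proof. exact: same_pblock (partition_trivIset partP). Qed.

Lemma pblock_sym x y : y \in pblock P x -> x \in pblock P y.
Proof. by move=> yx; rewrite (same_pblockT yx) mem_pblockT. Qed.

Lemma bumpP a b :
  reflect (a < b /\ b \in pblock P a /\ forall c, c \in pblock P a -> ~~ (a < c < b))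
          (Defs.bump P a b).
Proof.
apply: (iffP (bump_blockP P a b)) => [[ab [C CP [aC bC gap]]]|[ab [bA gap]]].
  by rewrite (def_pblockT CP aC).
by split => //; exists (pblock P a); rewrite ?pblock_memT ?mem_pblockT.
Qed.

Lemma bump_lt a b : Defs.bump P a b -> a < b.
Proof. by case/bumpP. Qed.

Lemma bump_pblock a b : Defs.bump P a b -> b \in pblock P a.
Proof. by case/bumpP => _ []. Qed.

Lemma bump_succ a b : a < b -> b \in pblock P a -> exists2 c, Defs.bump P a c & c <= b.
Proof.
move=> ab bA; have Pb : (b \in pblock P a) && (a < b) by rewrite bA ab.
case: (@arg_minnP _ b (fun c : T => (c \in pblock P a) && (a < c)) (@nat_of_ord n) Pb)
  => c /andP[cA ac] cmin.
exists c; last by apply: cmin; rewrite bA ab.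
apply/bumpP; split => //; split => // d dA; apply/negP => /andP[ad dc].
by move: (cmin d); rewrite dA ad => /(_ isT); lia.
Qed.

Lemma bump_pred a b : a < b -> b \in pblock P a -> exists2 c, Defs.bump P c b & a <= c.
Proof.
move=> ab bA; have Pa : (a \in pblock P a) && (a < b) by rewrite mem_pblockT ab.
case: (@arg_maxnP _ a (fun c : T => (c \in pblock P a) && (c < b)) (@nat_of_ord n) Pa)
  => c /andP[cA cb] cmax.
exists c; last by apply: cmax; rewrite mem_pblockT ab.
apply/bumpP; split => //; split; first by rewrite (same_pblockT cA).
move=> d; rewrite (same_pblockT cA) => dA; apply/negP => /andP[cd db].
by move: (cmax d); rewrite dA db => /(_ isT); lia.
Qed.

Lemma pblock_max a : (forall c, ~~ Defs.bump P a c) -> forall x, x \in pblock P a -> x <= a.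
Proof.
move=> noA x xA; rewrite leqNgt; apply/negP => ax.
by case: (bump_succ ax xA) => c /(negP (noA c)).
Qed.

Lemma pblock_min b : (forall c, ~~ Defs.bump P c b) -> forall x, x \in pblock P b -> b <= x.
Proof.
move=> noB x xB; rewrite leqNgt; apply/negP => xb.
by case: (bump_pred xb (pblock_sym xB)) => c /(negP (noB c)).
Qed.

Lemma bumps_arc_diagram : arc_diagram (bumps P).
Proof.
apply/arc_diagramP => [[a b] [c d]]; rewrite !in_bumps /= => /bumpP[ab [bA gapA]].
case/bumpP=> cd [dC gapC] [e|e]; subst.
  case: (ltngtP b d) => [bd|db|/val_inj -> //].
  - by move: (gapC b bA); rewrite ab bd.
  - by move: (gapA d dC); rewrite cd db.
have aC : a \in pblock P c by rewrite -(same_pblockT dC) (same_pblockT bA) mem_pblockT.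
case: (ltngtP a c) => [ac|ca|/val_inj -> //].
- by move: (gapA c (pblock_sym aC)); rewrite ac cd.
- by move: (gapC a aC); rewrite ca ab.
Qed.

End Partition.

Lemma pblock_bumps_subset P Q :
  partition P [set: T] -> partition Q [set: T] -> bumps P \subset bumps Q ->
  forall x y, y \in pblock P x -> y \in pblock Q x.
Proof.
move=> partP partQ /subsetP sPQ.
have bPQ a b : Defs.bump P a b -> Defs.bump Q a b by have := sPQ (a, b); rewrite !in_bumps.
suff lePQ k x y : y - x < k -> x <= y -> y \in pblock P x -> y \in pblock Q x.
  move=> x y yx; case: (leqP x y) => xy; first exact: (lePQ (y - x).+1).
  apply: (pblock_sym partQ); apply: (lePQ (x - y).+1) (ltnW xy) _ => //.
  exact: pblock_sym.
elim: k x y => [//|k IH] x y yxk; rewrite leq_eqVlt => /orP[/eqP/val_inj->|xy yx].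
  by rewrite (mem_pblockT partQ).
case: (bump_succ partP xy yx) => c xc cy.
have cP := bump_pblock partP xc; have cQ := bump_pblock partQ (bPQ _ _ xc).
rewrite -(same_pblockT partQ cQ); apply: IH => //; last by rewrite (same_pblockT partP cP).
by have := bump_lt partP xc; lia.
Qed.

Lemma bumps_inj : {in [pred P | partition P [set: T]] &, injective bumps}.
Proof.
move=> P Q partP partQ ePQ.
have eq_pblockPQ x y : (y \in pblock P x) = (y \in pblock Q x).
  by apply/idP/idP; apply: pblock_bumps_subset; rewrite // ePQ.
rewrite -(equivalence_partition_pblock partP) -(equivalence_partition_pblock partQ).
by apply: eq_imset => x; apply/setP => y; rewrite !inE eq_pblockPQ.
Qed.

Lemma bumps_discrete : bumps (preim_partition id [set: T]) = set0.
Proof.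
apply/setP => [[a b]]; rewrite in_bumps inE.
apply/negP => /bump_blockP [ab [C /imsetP[x _ ->] [aC bC _]]].
by move: aC bC ab; rewrite !inE => /eqP-> /eqP->; rewrite ltnn.
Qed.

Definition merge_blocks P (A B : {set T}) := (A :|: B) |: ((P :\ A) :\ B).

Section Merge.
Variables (P : {set {set T}}) (A B : {set T}) (a b : T).
Hypotheses (partP : partition P [set: T]) (AP : A \in P) (BP : B \in P).
Hypotheses (aA : a \in A) (bB : b \in B) (ab : a < b).
Hypotheses (A_le : forall x, x \in A -> x <= a) (B_ge : forall x, x \in B -> b <= x).

Lemma partition_merge : partition (merge_blocks P A B) [set: T].
Proof.
have BA : B != A by apply/eqP => eBA; have := @A_le b; rewrite -eBA bB => /(_ isT); lia.
have partPAB : partition ((P :\ A) :\ B) ([set: T] :\: A :\: B).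
  by apply: partitionD1; [apply: partitionD1 | rewrite in_setD1 BA].
have -> : [set: T] = (A :|: B) :|: ([set: T] :\: A :\: B).
  by apply/setP => x; rewrite !inE; case: (x \in A); case: (x \in B).
apply: partitionU1 partPAB _ _; first by apply/set0Pn; exists a; rewrite inE aA.
by rewrite -setI_eq0; apply/eqP/setP => x; rewrite !inE; case: (x \in A); case: (x \in B).
Qed.

Lemma bump_merge_old x y : Defs.bump P x y -> Defs.bump (merge_blocks P A B) x y.
Proof.
case/bump_blockP => xy [C CP [xC yC gapC]]; apply/bump_blockP; split => //.
have ABQ : A :|: B \in merge_blocks P A B by rewrite in_setU1 eqxx.
case: (eqVneq C A) => [eCA|CA]; first subst C.
  exists (A :|: B) => //; rewrite !inE xC yC; split => // c /setUP[/gapC //|cB].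
  by have := B_ge cB; have := A_le yC; lia.
case: (eqVneq C B) => [eCB|CB]; first subst C.
  exists (A :|: B) => //; rewrite !inE xC yC !orbT; split => // c /setUP[cA|/gapC //].
  by have := A_le cA; have := B_ge xC; lia.
by exists C => //; rewrite in_setU1 !in_setD1 CA CB CP !orbT.
Qed.

Lemma bump_merge_new : Defs.bump (merge_blocks P A B) a b.
Proof.
apply/bump_blockP; split => //; exists (A :|: B); first by rewrite in_setU1 eqxx.
rewrite !inE aA bB orbT; split => // c /setUP[/A_le|/B_ge]; lia.
Qed.

Lemma bump_merge_inv x y :
  Defs.bump (merge_blocks P A B) x y -> (x, y) = (a, b) \/ Defs.bump P x y.
Proof.
case/bump_blockP => xy [C]; rewrite in_setU1 !in_setD1 => /orP[/eqP-> | /and3P[_ _ CP]];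
  last by move=> [xC yC gapC]; right; apply/bump_blockP; split => //; exists C.
have aAB : a \in A :|: B by rewrite inE aA.
have bAB : b \in A :|: B by rewrite inE bB orbT.
case=> /setUP[xA|xB] /setUP[yA|yB] gapAB.
- right; apply/bump_blockP; split => //; exists A => //; split => // c cA.
  by apply: gapAB; rewrite inE cA.
- left; have xa : x = a :> nat.
    apply/eqP; rewrite eqn_leq A_le //= leqNgt; apply/negP => xa.
    by move: (gapAB a aAB); rewrite xa /= -leqNgt; have := B_ge yB; lia.
  have yb : y = b :> nat.
    apply/eqP; rewrite eqn_leq B_ge // andbT leqNgt; apply/negP => yb.
    by move: (gapAB b bAB); rewrite yb andbT -leqNgt; have := A_le xA; lia.
  by rewrite (val_inj xa) (val_inj yb).
- by have := B_ge xB; have := A_le yA; lia.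
- right; apply/bump_blockP; split => //; exists B => //; split => // c cB.
  by apply: gapAB; rewrite inE cB orbT.
Qed.

Lemma bumps_merge : bumps (merge_blocks P A B) = (a, b) |: bumps P.
Proof.
apply/setP => [[x y]]; rewrite in_setU1 !in_bumps.
apply/idP/orP => [/bump_merge_inv [->|]|[/eqP[-> ->] | /bump_merge_old //]].
- by left.
- by right.
- exact: bump_merge_new.
Qed.

End Merge.

Lemma bumps_onto E : arc_diagram E -> (forall a b, (a, b) \in E -> a < b) ->
  exists2 P, partition P [set: T] & bumps P = E.
Proof.
have [k] := ubnP #|E|; elim: k E => // k IH E Ek diagE ltE.
have [->|[[a b] abE]] := set_0Vmem E.
  by exists (preim_partition id [set: T]); [apply: preim_partitionP | apply: bumps_discrete].
have [P partP eP] : exists2 P, partition P [set: T] & bumps P = E :\ (a, b).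
  apply: IH; first by move: Ek; rewrite (cardsD1 (a, b)) abE.
    exact: arc_diagramS (subsetDl _ _) diagE.
  by move=> x y /setD1P[_ /ltE].
have a_max c : ~~ Defs.bump P a c.
  rewrite -in_bumps eP; apply/negP => /setD1P[acab acE]; move/eqP: acab; apply.
  exact: (arc_diagramP _ diagE _ _ acE abE (or_introl erefl)).
have b_min c : ~~ Defs.bump P c b.
  rewrite -in_bumps eP; apply/negP => /setD1P[cbab cbE]; move/eqP: cbab; apply.
  exact: (arc_diagramP _ diagE _ _ cbE abE (or_intror erefl)).
have AP := pblock_memT partP a; have BP := pblock_memT partP b.
have aA := mem_pblockT partP a; have bB := mem_pblockT partP b.
have A_le := pblock_max partP a_max; have B_ge := pblock_min partP b_min.
exists (merge_blocks P (pblock P a) (pblock P b)).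
  exact: partition_merge partP AP BP aA bB (ltE _ _ abE) A_le.
by rewrite (bumps_merge partP AP BP aA bB (ltE _ _ abE) A_le B_ge) eP setD1K.
Qed.

Lemma card_partitions_by_bumps (X : {set {set {set T}}}) (D : pred {set T * T}) :
  (forall P, (P \in X) = partition P [set: T] && D (bumps P)) ->
  (forall E, D E -> forall a b, (a, b) \in E -> a < b) ->
  #|X| = #|[set E | arc_diagram E && D E]|.
Proof.
move=> XE ltD; rewrite -(card_in_imset (f := bumps)); last first.
  by move=> P Q; rewrite !XE => /andP[partP _] /andP[partQ _]; apply: bumps_inj.
apply: eq_card => E; rewrite inE; apply/imsetP/andP => [[P] | [diagE DE]].
  by rewrite XE => /andP[partP DP] ->; rewrite bumps_arc_diagram.
have [P partP ePE] := bumps_onto diagE (ltD E DE).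
by exists P; rewrite // XE partP ePE DE.
Qed.

Definition weight (w : T -> T -> nat) E := \sum_(e in E) w e.1 e.2.

Definition swap_arcs E a b c d := (a, d) |: ((c, b) |: ((E :\ (a, b)) :\ (c, d))).

Section Swap.
Variables (E : {set T * T}) (a b c d : T).
Hypotheses (diagE : arc_diagram E) (abE : (a, b) \in E) (cdE : (c, d) \in E) (ac : a < c).
Local Notation R := ((E :\ (a, b)) :\ (c, d)).

Let a_neq_c : a != c. Proof. by rewrite neq_ltn ac. Qed.

Let ab_notin : (a, b) \notin (c, d) |: R.
Proof.
by rewrite in_setU1 negb_or !inE eqxx !andbF andbT; apply: contra a_neq_c => /eqP[->].
Qed.

Let cd_notin : (c, d) \notin R. Proof. by rewrite !inE eqxx. Qed.

Let E_split : E = (a, b) |: ((c, d) |: R).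
Proof.
have cdEab : (c, d) \in E :\ (a, b).
  by rewrite in_setD1 cdE andbT; apply: contra a_neq_c => /eqP[<-].
by rewrite setD1K // setD1K.
Qed.

Let ad_notin : (a, d) \notin (c, b) |: R.
Proof.
rewrite in_setU1 negb_or; apply/andP; split; first by apply: contra a_neq_c => /eqP[->].
apply: contra a_neq_c; rewrite !inE => /and3P[_ _ adE].
by case: (arc_diagramP _ diagE _ _ adE cdE (or_intror erefl)) => ->.
Qed.

Let cb_notin : (c, b) \notin R.
Proof.
apply: contra a_neq_c; rewrite !inE => /and3P[_ _ cbE].
by case: (arc_diagramP _ diagE _ _ cbE abE (or_intror erefl)) => ->.
Qed.

Lemma openers_swap : openers (swap_arcs E a b c d) = openers E.
Proof. by rewrite {2}E_split /swap_arcs /openers !imsetU1. Qed.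

Lemma closers_swap : closers (swap_arcs E a b c d) = closers E.
Proof. by rewrite {2}E_split /swap_arcs /closers !imsetU1 setUCA. Qed.

Lemma swap_arc_diagram : arc_diagram (swap_arcs E a b c d).
Proof.
have card_swap : #|swap_arcs E a b c d| = #|E|.
  by rewrite {2}E_split /swap_arcs !cardsU1 ad_notin cb_notin ab_notin cd_notin.
by move: diagE; rewrite !arc_diagram_card openers_swap closers_swap card_swap.
Qed.

Lemma weight_swap w :
  weight w (swap_arcs E a b c d) + (w a b + w c d) = weight w E + (w a d + w c b).
Proof. by rewrite /weight {2}E_split /swap_arcs !big_setU1 //=; lia. Qed.

End Swap.

Section Regions.
Variable r : T -> nat.
Hypothesis r_mono : {homo r : x y / x <= y}.

Definition separated E := [forall e in E, r e.1 < r e.2].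

Definition noncrossing E := [forall e in E, forall f in E,
  ([&& e.1 < f.1, f.1 < e.2 & e.2 < f.2] ==> (r e.1 == r f.1) || (r f.1 == r e.2))
  && ((e.1 < f.1) && (f.2 < e.2) ==> (r e.1 != r f.1))].

Lemma separatedP E : reflect (forall a b, (a, b) \in E -> r a < r b) (separated E).
Proof.
apply: (iffP forallP) => [sepE a b abE|sepE [a b]]; last by apply/implyP => /sepE.
by move: (sepE (a, b)); rewrite abE.
Qed.

Lemma noncrossingP E :
  reflect (forall a b c d, (a, b) \in E -> (c, d) \in E ->
             (a < c -> c < b -> b < d -> r a = r c \/ r c = r b) /\
             (a < c -> d < b -> r a <> r c))
          (noncrossing E).
Proof.
apply: (iffP forallP) => [ncE a b c d abE cdE|ncE [a b]].
  move: (ncE (a, b)); rewrite abE => /forallP /(_ (c, d)); rewrite cdE /=.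
  case/andP => cross nest; split.
  - by move=> ac cb bd; move: cross; rewrite ac cb bd /= => /orP[]/eqP; [left|right].
  - by move=> ac db; move: nest; rewrite ac db /= => /eqP.
apply/implyP => abE; apply/forallP => [[c d]]; apply/implyP => cdE /=.
case: (ncE a b c d abE cdE) => cross nest; apply/andP; split.
  by apply/implyP => /and3P[ac cb bd]; case: (cross ac cb bd) => ->; rewrite eqxx ?orbT.
by apply/implyP => /andP[ac db]; apply/eqP; apply: nest.
Qed.

Lemma r_lt_ltn x y : r x < r y -> x < y.
Proof. by apply: contraTT; rewrite -!leqNgt => /r_mono. Qed.

Lemma separated_ltn E a b : separated E -> (a, b) \in E -> a < b.
Proof. by move=> /separatedP sepE /sepE /r_lt_ltn. Qed.

Lemma separated_swap E a b c d :
  separated E -> r a < r d -> r c < r b -> separated (swap_arcs E a b c d).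
Proof.
move=> /separatedP sepE ad cb; apply/separatedP => x y; rewrite !in_setU1.
by case/orP => [/eqP[-> ->] // | /orP[/eqP[-> ->] // | /setD1P[_ /setD1P[_ /sepE]]]].
Qed.

Definition endpoints E := (openers E, closers E).

Section Endpoints.
Variable D : pred {set T * T}.
Hypothesis D_separated : forall E, D E -> separated E.
Hypothesis crossing_nesting : forall E1 E2 a1 a2 b b1 b2, D E1 -> D E2 ->
  (a1, b) \in E1 -> (a2, b2) \in E1 -> (a2, b) \in E2 -> (a1, b1) \in E2 ->
  a1 < a2 -> b < b2 -> b < b1 -> False.
Variable w : T -> T -> nat.
Hypothesis swap_decreases : forall E, arc_diagram E -> separated E -> ~~ D E ->
  exists a b c d, [/\ (a, b) \in E, (c, d) \in E, a < c, r a < r d /\ r c < r b &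
                      w a d + w c b < w a b + w c d].

Lemma arcs_to_closer_subset E1 E2 b :
  D E1 -> D E2 -> arc_diagram E1 -> arc_diagram E2 -> endpoints E1 = endpoints E2 ->
  (forall b' a, b' < b -> ((a, b') \in E1) = ((a, b') \in E2)) ->
  forall a1, (a1, b) \in E1 -> (a1, b) \in E2.
Proof.
move=> DE1 DE2 /arc_diagramP diag1 /arc_diagramP diag2 [eo ec] below a1 a1b.
have /closersP[a2 a2b] : b \in closers E2 by rewrite -ec; apply/closersP; exists a1.
have [-> //|a12] := eqVneq a1 a2.
have /openersP[b1 a1b1] : a1 \in openers E2 by rewrite -eo; apply/openersP; exists b.
have /openersP[b2 a2b2] : a2 \in openers E1 by rewrite eo; apply/openersP; exists b.
have bb1 : b < b1.
  case: (ltngtP b b1) => [//|b1b|/val_inj eb].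
    rewrite -below // in a1b1.
    by case: (diag1 _ _ a1b a1b1 (or_introl erefl)) => eb; rewrite eb ltnn in b1b.
  rewrite -eb in a1b1.
  by case: (diag2 _ _ a1b1 a2b (or_intror erefl)) => ea; rewrite ea eqxx in a12.
have bb2 : b < b2.
  case: (ltngtP b b2) => [//|b2b|/val_inj eb].
    rewrite below // in a2b2.
    by case: (diag2 _ _ a2b a2b2 (or_introl erefl)) => eb; rewrite eb ltnn in b2b.
  rewrite -eb in a2b2.
  by case: (diag1 _ _ a1b a2b2 (or_intror erefl)) => ea; rewrite ea eqxx in a12.
case: (ltngtP a1 a2) => [a1a2|a2a1|/val_inj ea]; last by rewrite ea eqxx in a12.
- by case: (crossing_nesting DE1 DE2 a1b a2b2 a2b a1b1 a1a2 bb2 bb1).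
- by case: (crossing_nesting DE2 DE1 a2b a1b1 a1b a2b2 a2a1 bb1 bb2).
Qed.

Lemma endpoints_inj : {in [pred E | arc_diagram E && D E] &, injective endpoints}.
Proof.
move=> E1 E2 /andP[diag1 DE1] /andP[diag2 DE2] e12.
suff below k : forall b : T, b < k -> forall a, ((a, b) \in E1) = ((a, b) \in E2).
  by apply/setP => [[a b]]; apply: (below b.+1).
elim: k => [//|k IH] b bk a.
have IHb b' a' : b' < b -> ((a', b') \in E1) = ((a', b') \in E2).
  by move=> b'b; apply: IH; apply: leq_trans b'b _.
apply/idP/idP; first exact: (arcs_to_closer_subset DE1 DE2 diag1 diag2 e12 IHb).
apply: (arcs_to_closer_subset DE2 DE1 diag2 diag1 (esym e12)).
by move=> b' a' b'b; rewrite IHb.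
Qed.

Lemma exists_endpoints E : arc_diagram E -> separated E ->
  exists2 F, [&& arc_diagram F, separated F & D F] & endpoints F = endpoints E.
Proof.
have [k] := ubnP (weight w E); elim: k E => // k IH E wEk diagE sepE.
have [DE|] := boolP (D E); first by exists E; rewrite ?diagE ?sepE ?DE.
case/(swap_decreases diagE sepE) => a [b [c [d [abE cdE ac [ad cb] wlt]]]].
have wswap : weight w (swap_arcs E a b c d) < k.
  by have := weight_swap diagE abE cdE ac w; lia.
have [F DF eF] := IH _ wswap (swap_arc_diagram diagE abE cdE ac) (separated_swap sepE ad cb).
by exists F; rewrite // eF /endpoints (openers_swap abE cdE ac) (closers_swap abE cdE ac).
Qed.

Lemma card_diagrams_endpoints :
  #|[set E | arc_diagram E && D E]| = #|endpoints @: [set E | arc_diagram E && separated E]|.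
Proof.
rewrite -(card_in_imset (f := endpoints)); last first.
  by move=> E1 E2; rewrite !inE; apply: endpoints_inj.
congr #|pred_of_set _|; apply/setP => p.
apply/imsetP/imsetP => [][E]; rewrite inE => /andP[diagE DE] ->.
  by exists E; rewrite // inE diagE D_separated.
have [F /and3P[diagF _ DF] eF] := exists_endpoints diagE DE.
by exists F; rewrite // inE diagF DF.
Qed.

End Endpoints.


Lemma nonnesting_crossing_nesting E1 E2 a1 a2 b b1 b2 :
  separated E1 && nonnesting E1 -> separated E2 && nonnesting E2 ->
  (a1, b) \in E1 -> (a2, b2) \in E1 -> (a2, b) \in E2 -> (a1, b1) \in E2 ->
  a1 < a2 -> b < b2 -> b < b1 -> False.
Proof.
move=> _ /andP[_ /nonnestingP nestE2] _ _ a2b a1b1 a12 _ bb1.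
exact: nestE2 a1b1 a2b a12 bb1.
Qed.

Lemma noncrossing_crossing_nesting E1 E2 a1 a2 b b1 b2 :
  separated E1 && noncrossing E1 -> separated E2 && noncrossing E2 ->
  (a1, b) \in E1 -> (a2, b2) \in E1 -> (a2, b) \in E2 -> (a1, b1) \in E2 ->
  a1 < a2 -> b < b2 -> b < b1 -> False.
Proof.
move=> /andP[_ /noncrossingP ncE1] /andP[sepE2 /noncrossingP ncE2] a1b a2b2 a2b a1b1 a12 bb2 bb1.
have ra2b := separatedP _ sepE2 a2 b a2b.
have [/(_ a12 (separated_ltn sepE2 a2b) bb2) cross _] := ncE1 _ _ _ _ a1b a2b2.
have [_ /(_ a12 bb1) nest] := ncE2 _ _ _ _ a1b1 a2b.
by case: cross => // e; rewrite e ltnn in ra2b.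
Qed.

Lemma nonnesting_swap_decreases E :
  arc_diagram E -> separated E -> ~~ (separated E && nonnesting E) ->
  exists a b c d, [/\ (a, b) \in E, (c, d) \in E, a < c, r a < r d /\ r c < r b &
                      a * (n - d) + c * (n - b) < a * (n - b) + c * (n - d)].
Proof.
move=> _ sepE; rewrite sepE /= => /forallPn[[a b]]; rewrite negb_imply.
case/andP=> abE /forallPn[[c d]]; rewrite negb_imply negbK => /andP[cdE /andP[/= ac db]].
exists a, b, c, d; split => //.
  have := r_mono (ltnW ac); have := r_mono (ltnW db); have := separatedP _ sepE c d cdE.
  by split; lia.
by apply: rearrangement_ltn => //; have := ltn_ord b; lia.
Qed.

(* Lexicographic in (r x, -x), so that exchanging the closers of a violation of
   [noncrossing] lowers the weight [region_key a * b] (rearrangement). *)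
Definition region_key x := n.+1 * r x + (n - x).

Lemma region_key_lt x y : r x < r y -> region_key x < region_key y.
Proof.
move=> rxy; rewrite /region_key.
have := leq_mul (leqnn n.+1) rxy; rewrite mulnS.
by have := ltn_ord x; have := ltn_ord y; lia.
Qed.

Lemma region_key_gt x y : r x = r y -> x < y -> region_key y < region_key x.
Proof. by rewrite /region_key => ->; have := ltn_ord y; lia. Qed.

Lemma noncrossing_swap_decreases E :
  arc_diagram E -> separated E -> ~~ (separated E && noncrossing E) ->
  exists a b c d, [/\ (a, b) \in E, (c, d) \in E, a < c, r a < r d /\ r c < r b &
     region_key a * d + region_key c * b < region_key a * b + region_key c * d].
Proof.
move=> _ sepE; rewrite sepE /= => /forallPn[[a b]]; rewrite negb_imply.
case/andP=> abE /forallPn[[c d]]; rewrite negb_imply negb_and => /andP[cdE] /=.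
have rcd := separatedP _ sepE c d cdE.
case/orP; rewrite negb_imply.
  rewrite negb_or => /andP[/and3P[ac cb bd] /andP[rac rcb]].
  have rac' : r a < r c by rewrite ltn_neqAle rac r_mono // ltnW.
  have rcb' : r c < r b by rewrite ltn_neqAle rcb r_mono // ltnW.
  exists a, b, c, d; split => //; first by split; lia.
  by apply: rearrangement_ltn => //; apply: region_key_lt.
case/andP => /andP[ac db] /negPn/eqP rac.
have := r_mono (ltnW db) => rdb.
exists a, b, c, d; split => //; first by split; lia.
by have := rearrangement_ltn (region_key_gt rac ac) db; lia.
Qed.

Lemma card_nonnesting_noncrossing :
  #|[set E | arc_diagram E && (separated E && nonnesting E)]| =
  #|[set E | arc_diagram E && (separated E && noncrossing E)]|.
Proof.
have sepN E : separated E && nonnesting E -> separated E by case/andP.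
have sepC E : separated E && noncrossing E -> separated E by case/andP.
rewrite (@card_diagrams_endpoints (fun E => separated E && nonnesting E) sepN
           nonnesting_crossing_nesting (fun x y => x * (n - y)) nonnesting_swap_decreases).
by rewrite (@card_diagrams_endpoints (fun E => separated E && noncrossing E) sepC
              noncrossing_crossing_nesting (fun x y => region_key x * y)
              noncrossing_swap_decreases).
Qed.

End Regions.

Lemma pair_neq_ltn a b c d : a < c -> (a, b) != (c, d).
Proof. by move=> ac; apply/eqP => -[ac_eq _]; rewrite ac_eq ltnn in ac. Qed.

Section JRegions.
Variable J : {set 'I_(n.-1)}.

Definition boundaries_below x := [set k : 'I_(n.-1) | (k < x) && (k \notin J)].

Definition region x := #|boundaries_below x|.

Lemma boundaries_below_subset x y : x <= y -> boundaries_below x \subset boundaries_below y.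
Proof.
move=> xy; apply/subsetP => k; rewrite !inE => /andP[kx ->]; rewrite andbT.
exact: leq_trans kx xy.
Qed.

Lemma region_mono : {homo region : x y / x <= y}.
Proof. by move=> x y /boundaries_below_subset /subset_leq_card. Qed.

Lemma same_regionE x y : same_region J x y = (region x == region y).
Proof.
wlog xy : x y / x <= y.
  move=> sym; case: (leqP x y) => [|/ltnW]; first exact: sym.
  by rewrite /same_region minnC maxnC eq_sym; apply: sym.
rewrite /same_region (minn_idPl xy) (maxn_idPr xy) /region.
have [_ ->] := subset_leqif_cards (boundaries_below_subset xy).
rewrite eqEsubset boundaries_below_subset //=.
apply/forallP/subsetP => [inJ k | below_x k].
  rewrite !inE => /andP[ky kJ]; rewrite kJ andbT ltnNge; apply: contra kJ => xk.
  by have := inJ k; rewrite xk ky.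
apply/implyP => /andP[xk ky]; apply: contraT => kJ.
by have := below_x k; rewrite !inE ky kJ ltnNge xk => /(_ isT).
Qed.

Lemma cond1_separated P : partition P [set: T] -> cond1 J P = separated region (bumps P).
Proof.
move=> partP; apply/idP/separatedP => [c1 a b|sepP].
  rewrite in_bumps => ab; case/(bumpP partP): (ab) => lt [bA _].
  move/forallP: c1 => /(_ (pblock P a)); rewrite (pblock_memT partP) /=.
  move=> /forallP /(_ a); rewrite (mem_pblockT partP) /= => /forallP /(_ b).
  rewrite bA neq_ltn lt same_regionE /= => rab.
  by rewrite ltn_neqAle rab region_mono // ltnW.
apply/forallP => B; apply/implyP => BP; apply/forallP => x; apply/implyP => xB.
apply/forallP => y; apply/implyP => yB; apply/implyP => xy; rewrite same_regionE.
wlog lt : x y xB yB xy / x < y.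
  move=> sym; case: (ltngtP x y) => [|yx|/val_inj exy]; first exact: sym.
    by rewrite eq_sym; apply: sym; rewrite // eq_sym.
  by rewrite exy eqxx in xy.
have yx : y \in pblock P x by rewrite (def_pblockT partP BP xB).
case: (bump_succ partP lt yx) => c xc cy.
have := sepP x c; rewrite in_bumps => /(_ xc).
by have := region_mono cy; lia.
Qed.

Lemma NN_bumpsE P :
  (P \in NN J) = partition P [set: T] && (separated region (bumps P) && nonnesting (bumps P)).
Proof.
rewrite inE; have [partP|] //= := boolP (partition P [set: T]).
rewrite cond1_separated //; congr (_ && _).
apply/forall4P/nonnestingP => [nn a b c d | nn a b c d].
  rewrite !in_bumps => ab cd ac db; move: (nn a b c d).
  by rewrite ab cd ac db (bump_lt partP cd) (pair_neq_ltn _ _ ac).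
by apply/negP => /and5P[ab cd _ ac /andP[_ db]]; apply: (nn a b c d); rewrite ?in_bumps.
Qed.

Lemma NC_bumpsE P :
  (P \in NC J) = partition P [set: T] && (separated region (bumps P) && noncrossing region (bumps P)).
Proof.
rewrite inE; have [partP|] //= := boolP (partition P [set: T]).
rewrite cond1_separated //; congr (_ && _).
apply/andP/noncrossingP => [[/forall4P nc2 /forall4P nc3] a b c d | nc].
  rewrite !in_bumps => ab cd; split => [ac cb bd | ac db].
    move: (nc2 a b c d); rewrite ab cd ac cb bd (pair_neq_ltn _ _ ac) !same_regionE /=.
    by case/orP => /eqP; [left | right].
  move: (nc3 a b c d); rewrite ab cd ac db (bump_lt partP cd) (pair_neq_ltn _ _ ac) /=.
  by rewrite same_regionE => /eqP.
split; apply/forall4P => a b c d; apply/implyP.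
  case/and5P => ab cd _ ac /andP[cb bd]; rewrite -!in_bumps in ab cd.
  rewrite !same_regionE; have [/(_ ac cb bd) [] -> _] := nc a b c d ab cd.
    by rewrite eqxx.
  by rewrite eqxx orbT.
case/and5P => ab cd _ ac /andP[_ db]; rewrite -!in_bumps in ab cd.
by have [_ /(_ ac db) /eqP] := nc a b c d ab cd; rewrite same_regionE.
Qed.

Lemma card_NN_NC : #|NN J| = #|NC J|.
Proof.
have ltD (D : pred {set T * T}) E :
    separated region E && D E -> forall a b, (a, b) \in E -> a < b.
  by case/andP => sepE _ a b abE; have := separated_ltn region_mono sepE abE.
rewrite (card_partitions_by_bumps NN_bumpsE (ltD nonnesting)).
rewrite (card_partitions_by_bumps NC_bumpsE (ltD (noncrossing region))).
exact: card_nonnesting_noncrossing region_mono.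
Qed.

End JRegions.
End Arcs.

Theorem theorem5p3 (n : nat) (J : {set 'I_(n.-1)}) :
  0 < n ->
  exists f : {P : {set {set 'I_n}} | P \in NN J} ->
             {P : {set {set 'I_n}} | P \in NC J},
    bijective f.
Proof.
move=> _; apply: card_eq_bijective; rewrite !card_sig.
by have := card_NN_NC J; congr (_ = _); apply: eq_card.
Qed.
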